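(* For integers $2\leq k\leq n$, $$D(n,k)=(k-1)\, D(n-1,k) + k\, D(n-1,k-1).$$ In addition, $D(n,n)=n!$, $D(n,1)=0$ for $n>1$, and $D(n,k)=0$ for $k>n$.
   Context: A walk of length $n-1$ in a graph is a sequence of $n$ vertices $v_1,\dots,v_n$ such that $\{v_i,v_{i+1}\}$ is an edge for each $i$. $D(n,k)$ denotes the number of walks of length $n-1$ in the complete graph $K_k$ on $k$ labelled vertices (no self-loops) that visit every vertex of $K_k$ at least once. *)

From mathcomp Require Import all_boot.
Set Implicit Arguments. Unset Strict Implicit. Unset Printing Implicit Defensive.

(* Vertices of K_k are 'I_k; a walk of length n-1 is a sequence of n vertices
   (an n.-tuple) with consecutive vertices distinct (edges of K_k, no loops). *)
Definition is_walk (k : nat) (w : seq 'I_k) : bool := sorted (fun x y => x != y) w.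

Definition covers (k : nat) (w : seq 'I_k) : bool := [forall v : 'I_k, v \in w].

Definition D (n k : nat) : nat :=
  #|[set w : n.-tuple 'I_k | is_walk w && covers w]|.

From mathcomp Require Import all_boot.
Set Implicit Arguments. Unset Strict Implicit. Unset Printing Implicit Defensive.

(* Split a covering walk x :: t of K_(k+1), t nonempty, by its first vertex.
   Either t already covers K_(k+1), and x is any of the k vertices other than
   the head of t; or t visits every vertex except x, and relabelling the
   remaining k vertices turns t into a covering walk of K_k.  Summing over x
   gives the recurrence; a covering walk of K_k has at least k vertices. *)

Section TupleBig.

Variables (R : Type) (idx : R) (op : Monoid.com_law idx).

Lemma big_tuple_cons (T : finType) n (F : n.+1.-tuple T -> R) :
  \big[op/idx]_(w : n.+1.-tuple T) F w =
    \big[op/idx]_(x : T) \big[op/idx]_(t : n.-tuple T) F [tuple of x :: t].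
Proof.
rewrite pair_big /=.
pose uncons (w : n.+1.-tuple T) := (thead w, [tuple of behead w]).
rewrite (reindex (fun p : T * n.-tuple T => [tuple of p.1 :: p.2])) //.
exists uncons => [[x t] _ | w _]; first by congr (_, _); apply: val_inj.
exact/esym/tuple_eta.
Qed.

End TupleBig.

Lemma sum_nat_bool_card (T : finType) (P : pred T) :
  \sum_(i : T) (P i : nat) = #|[set i | P i]|.
Proof. by rewrite -sum1dep_card [RHS]big_mkcond; apply: eq_bigr => i _; case: (P i). Qed.

Definition walk_covering k (w : seq 'I_k) : bool := is_walk w && covers w.

Lemma D_sum n k : D n k = \sum_(w : n.-tuple 'I_k) walk_covering w.
Proof. by rewrite sum_nat_bool_card. Qed.

Lemma covers_size k (w : seq 'I_k) : covers w -> k <= size w.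
Proof.
move=> /forallP cov; rewrite -[X in X <= _]card_ord.
apply: leq_trans (card_size w); apply/subset_leq_card/subsetP => v _.
exact: cov.
Qed.

Lemma D_small n k : n < k -> D n k = 0.
Proof.
move=> lt_nk; apply/eqP; rewrite cards_eq0; apply/eqP/setP => w.
rewrite !inE; apply/negbTE/andP => -[_ /covers_size].
by rewrite size_tuple leqNgt lt_nk.
Qed.

Lemma D_S0 n : D n.+1 0 = 0.
Proof. by rewrite D_sum big_tuple_cons big_ord0. Qed.

Lemma D11 : D 1 1 = 1.
Proof.
rewrite D_sum big_tuple_cons (big_pred1 ord0) => [|x]; last by rewrite /= ord1 eqxx.
rewrite (big_pred1 [tuple]) => [|t]; last by rewrite /= [t]tuple0.
by rewrite /walk_covering (_ : covers _) //; apply/forallP => v; rewrite ord1 inE.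
Qed.

Lemma is_walk_map k k' (f : 'I_k -> 'I_k') (w : seq 'I_k) :
  injective f -> is_walk (map f w) = is_walk w.
Proof.
move=> f_inj; rewrite /is_walk sorted_map; case: w => //= x w.
by apply: eq_path => a b /=; rewrite (inj_eq f_inj).
Qed.

Definition walk_covering_but k (x : 'I_k) (w : seq 'I_k) : bool :=
  [&& is_walk w, x \notin w & [forall v, (v != x) ==> (v \in w)]].

Lemma walk_covering_cons k (x y : 'I_k) (t : seq 'I_k) :
  (walk_covering (x :: y :: t) : nat)
    = (walk_covering (y :: t) && (x != y)) + walk_covering_but x (y :: t).
Proof.
set covers_but_x := [forall v, (v != x) ==> (v \in y :: t)].
have covers_cons : covers (x :: y :: t) = covers_but_x.
  by apply: eq_forallb => v; rewrite in_cons; case: eqVneq.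
have covers_split : covers (y :: t) = (x \in y :: t) && covers_but_x.
  apply/forallP/andP => [cov | [xin /forallP cov_x] v].
    by split; [|apply/forallP => v; apply/implyP => _]; apply: cov.
  by case: (eqVneq v x) (cov_x v) => [-> | _ /= ->].
rewrite /walk_covering_but /walk_covering /is_walk /= -/covers_but_x covers_cons covers_split.
have [_ | xnin] := boolP (x \in y :: t).
  by rewrite andbF addn0 /= [_ && (x != y)]andbC andbA.
have x_neq_y : x != y by apply: contraNneq xnin => ->; exact: mem_head.
by rewrite x_neq_y /= andbF.
Qed.

Lemma map_lift_pmap_unlift n (x : 'I_n) (s : seq 'I_n) :
  x \notin s -> map (lift x) (pmap (unlift x) s) = s.
Proof.
elim: s => //= y s IH; rewrite in_cons negb_or => /andP[x_neq_y x_notin_s].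
by case: (unlift_some x_neq_y) => j -> ->; rewrite /= IH.
Qed.

Lemma walk_covering_but_lift k (x : 'I_k.+1) (w : seq 'I_k) :
  walk_covering_but x (map (lift x) w) = walk_covering w.
Proof.
rewrite /walk_covering_but /walk_covering is_walk_map; last exact: lift_inj.
have -> : x \notin map (lift x) w by apply/mapP => -[y _ /eqP]; rewrite eq_liftF.
congr (_ && _); apply/forallP/forallP => [cov v | cov v].
  by have := cov (lift x v); rewrite lift_eqF (mem_map lift_inj).
apply/implyP; rewrite eq_sym => /unlift_some[j -> _].
by rewrite (mem_map lift_inj).
Qed.

(* Deleting the unvisited vertex [x] relabels these walks as covering walks of K_k. *)
Lemma sum_walk_covering_but k n (x : 'I_k.+1) :
  \sum_(t : n.-tuple 'I_k.+1) walk_covering_but x t = D n k.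
Proof.
have map_lift_inj : injective (map_tuple (lift x) : n.-tuple 'I_k -> _).
  by move=> t1 t2 /(congr1 val)/(inj_map lift_inj)/val_inj.
rewrite sum_nat_bool_card /D -(card_imset _ map_lift_inj).
apply: eq_card => t; rewrite inE; apply/idP/imsetP => [t_but | [w w_cov ->]].
  have x_notin_t : x \notin t by case/and3P: t_but.
  have size_w : size (pmap (unlift x) t) == n.
    by rewrite -(size_map (lift x)) map_lift_pmap_unlift ?size_tuple.
  exists (Tuple size_w).
    rewrite inE; change (walk_covering (pmap (unlift x) t)).
    by rewrite -(walk_covering_but_lift x) map_lift_pmap_unlift.
  exact/val_inj/esym/map_lift_pmap_unlift.
by rewrite inE in w_cov; exact: etrans (walk_covering_but_lift x w) w_cov.
Qed.

Lemma sum_neq (T : finType) (y : T) : \sum_(x : T) (x != y : nat) = #|T|.-1.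
Proof. by rewrite sum_nat_bool_card -(cardsC1 y); apply: eq_card => x; rewrite !inE. Qed.

Lemma DS n k : D n.+2 k.+1 = k * D n.+1 k.+1 + k.+1 * D n.+1 k.
Proof.
have split_head (x : 'I_k.+1) :
    \sum_(t : n.+1.-tuple 'I_k.+1) walk_covering [tuple of x :: t]
  = \sum_(t : n.+1.-tuple 'I_k.+1) (walk_covering t && (x != thead t))
    + \sum_(t : n.+1.-tuple 'I_k.+1) walk_covering_but x t.
  by rewrite -big_split; apply: eq_bigr => t _; rewrite [t]tuple_eta walk_covering_cons.
rewrite D_sum big_tuple_cons (eq_bigr _ (fun x _ => split_head x)) big_split /=.
under [X in _ + X]eq_bigr do rewrite sum_walk_covering_but.
rewrite sum_nat_const card_ord exchange_big; congr (_ + _).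
rewrite D_sum big_distrr; apply: eq_bigr => t _; under eq_bigr do rewrite -mulnb.
by rewrite -big_distrr sum_neq card_ord /= mulnC.
Qed.

Theorem mainTheorem3 :
  (forall n k : nat, 2 <= k -> k <= n ->
      D n k = (k - 1) * D n.-1 k + k * D n.-1 k.-1)
  /\ (forall n : nat, 1 <= n -> D n n = n`!)
  /\ (forall n : nat, 1 < n -> D n 1 = 0)
  /\ (forall n k : nat, 1 <= n -> n < k -> D n k = 0).
Proof.
split; [|split; [|split]].
- move=> [|[|n]] [|k] // le2k lekn; first by have := leq_trans le2k lekn.
  by rewrite DS subn1.
- elim=> [|[|n] IHn] // _; first exact: D11.
  by rewrite DS D_small // muln0 IHn // factS.
- by move=> [|[|n]] // _; rewrite DS D_S0 muln0.
- by move=> n k _; apply: D_small.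
Qed.
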